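(* Let $\alpha\le\omega_1$. 1) For every $B\in\mathcal B_\alpha$: (i) $D_{\mathrm{iie}}^{\alpha'}(B)$ is finite; (ii) if $\alpha$ is even, $D_{\mathrm{iie}}^{\alpha'}(B)$ is either empty or equal to $\{\emptyset\}$. 2) For every $A\in\mathcal A_\alpha$: (i) $D_{\mathrm{iie}}^{\alpha'}(D_{\mathrm{iie}}(A))$ is finite; (ii) if $\alpha$ is even, $D_{\mathrm{iie}}^{\alpha'}(D_{\mathrm{iie}}(A))$ is either empty or equal to $\{\emptyset\}$.
   Context: $\omega^{<\omega}$ finite sequences of naturals, $s^\frown t$ concatenation (also for $t\in\omega^\omega$), $h^\frown B=\{h^\frown s:s\in B\}$. For $S\subset\omega^{<\omega}\cup\omega^\omega$, $\mathrm{cl}_{\mathrm{Tr}}(S)$ is the set of finite initial segments of elements of $S$. For a tree $T$, $D_{\mathrm{iie}}(T)=\{t\in T: T$ contains infinitely many pairwise incomparable extensions of $t$ of pairwise different lengths$\}$; for any $S$, $D_{\mathrm{iie}}(S)=D_{\mathrm{iie}}(\mathrm{cl}_{\mathrm{Tr}}(S))$, $D^0_{\mathrm{iie}}(S)=\mathrm{cl}_{\mathrm{Tr}}(S)$, $D^{\beta+1}_{\mathrm{iie}}=D_{\mathrm{iie}}\circ D^\beta_{\mathrm{iie}}$, $D^\lambda_{\mathrm{iie}}(S)=\bigcap_{\beta<\lambda}D^\beta_{\mathrm{iie}}(S)$ for limit $\lambda$. For $\alpha=\lambda+2n+i$ ($\lambda$ limit or 0, $n\in\omega$, $i\in\{0,1\}$),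 $\alpha'=\lambda+n$; parity of $\alpha$ is that of $i$ (so $\omega_1$ is even, $\omega_1'=\omega_1$). A forking sequence is a sequence $(f_n)_{n\in\omega}$ of nonempty elements of $\omega^{<\omega}$ with $f_n(0)\ne f_m(0)$ for $n\ne m$. Finite broom sets: $\mathcal B_0=\{\{\emptyset\}\}$; for $1\le\alpha<\omega_1$ odd, $\mathcal B_\alpha=\mathcal B_{<\alpha}\cup\{h^\frown B: B\in\mathcal B_{\alpha-1},h\in\omega^{<\omega}\}$; for $0<\alpha<\omega_1$ even, $\mathcal B_\alpha=\mathcal B_{<\alpha}\cup\{\bigcup_nf_n^\frown B_n: B_n\in\mathcal B_{<\alpha},(f_n)$ forking$\}$, where $\mathcal B_{<\alpha}=\bigcup_{\beta<\alpha}\mathcal B_\beta$; $\mathcal B_{\omega_1}=\bigcup_{\alpha<\omega_1}\mathcal B_\alpha$. A countable set $A\subset\omega^\omega$ is a broom-extension of $B\in\mathcal B_{\omega_1}$ if $A=\{s^\frown f^s_n{}^\frown\nu^s_n: s\in B,n\in\omega\}$ for some forking sequences $(f^s_n)_n$, $s\in B$, and some $\nu^s_n\in\omega^\omega$. $\mathcal A_\alpha$ is the set of broom-extensions of elements of $\mathcal B_\alpha$. *)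

From Stdlib Require Import Arith List.
Import ListNotations.

(* omega^{<omega} = list nat ; omega^omega = nat -> nat ;
   subsets are predicates. *)

Definition prefix (t s : list nat) : Prop := exists u, s = t ++ u.

Definition prefix_inf (t : list nat) (x : nat -> nat) : Prop :=
  forall i, i < length t -> nth i t 0 = x i.

Definition incomparable (a b : list nat) : Prop := ~ prefix a b /\ ~ prefix b a.

Definition app_inf (s : list nat) (y : nat -> nat) : nat -> nat :=
  fun i => if i <? length s then nth i s 0 else y (i - length s).

Definition clTr (S : list nat -> Prop) : list nat -> Prop :=
  fun t => exists s, S s /\ prefix t s.
Definition clTr_inf (A : (nat -> nat) -> Prop) : list nat -> Prop :=
  fun t => exists x, A x /\ prefix_inf t x.

Definition Diie_tree (T : list nat -> Prop) : list nat -> Prop :=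
  fun t => T t /\
    exists g : nat -> list nat,
      (forall n, T (g n) /\ prefix t (g n)) /\
      (forall n m, n <> m -> incomparable (g n) (g m) /\ length (g n) <> length (g m)).

Definition Diie (S : list nat -> Prop) : list nat -> Prop := Diie_tree (clTr S).
Definition Diie_inf (A : (nat -> nat) -> Prop) : list nat -> Prop := Diie_tree (clTr_inf A).

Definition finite_set (P : list nat -> Prop) : Prop :=
  exists l : list (list nat), forall s, P s -> In s l.

Definition empty_or_root (P : list nat -> Prop) : Prop :=
  (forall s, ~ P s) \/ (forall s, P s <-> s = []).

(* We model the ordinals <= omega_1 by an arbitrary strict well-order
   (O, lt) of order type omega_1 + 1: it has a greatest element w, every
   element below w has countably many predecessors, and w has uncountably
   many predecessors.  This determines (O, lt) up to isomorphism. *)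

Definition countable_below {O : Type} (lt : O -> O -> Prop) (b : O) : Prop :=
  exists e : nat -> O, forall c, lt c b -> exists n, e n = c.

Definition is_top {O : Type} (lt : O -> O -> Prop) (w : O) : Prop :=
  forall b, b = w \/ lt b w.

Definition IsOmega1Plus1 {O : Type} (lt : O -> O -> Prop) : Prop :=
  (forall a, ~ lt a a) /\
  (forall a b c, lt a b -> lt b c -> lt a c) /\
  (forall a b, lt a b \/ a = b \/ lt b a) /\
  well_founded lt /\
  exists w, is_top lt w /\
            (forall b, lt b w -> countable_below lt b) /\
            ~ countable_below lt w.

Section Ord.
Context {O : Type} (lt : O -> O -> Prop).

Definition is_zero (a : O) : Prop := forall b, ~ lt b a.
Definition is_succ_of (b a : O) : Prop := lt b a /\ forall c, ~ (lt b c /\ lt c a).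
Definition is_limit (a : O) : Prop := ~ is_zero a /\ ~ exists b, is_succ_of b a.

Fixpoint succn (l : O) (k : nat) (a : O) : Prop :=
  match k with
  | 0 => a = l
  | S k => exists b, succn l k b /\ is_succ_of b a
  end.

Definition prime_of (a a' : O) : Prop :=
  exists l n i, (is_zero l \/ is_limit l) /\ i < 2 /\
    succn l (2 * n + i) a /\ succn l n a'.

Definition is_even (a : O) : Prop :=
  exists l n, (is_zero l \/ is_limit l) /\ succn l (2 * n) a.
Definition is_odd (a : O) : Prop :=
  exists l n, (is_zero l \/ is_limit l) /\ succn l (2 * n + 1) a.

Definition IsDiter (S : list nat -> Prop) (F : O -> list nat -> Prop) : Prop :=
  forall b,
    (is_zero b -> forall t, F b t <-> clTr S t) /\
    (forall c, is_succ_of c b -> forall t, F b t <-> Diie (F c) t) /\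
    (is_limit b -> forall t, F b t <-> forall c, lt c b -> F c t).

(* D^a_iie(S): the value at a of the (unique) iteration family *)
Definition Dpow (S : list nat -> Prop) (a : O) : list nat -> Prop :=
  fun t => forall F, IsDiter S F -> F a t.

Definition forking (f : nat -> list nat) : Prop :=
  (forall n, f n <> []) /\
  (forall n m, n <> m -> hd 0 (f n) <> hd 0 (f m)).

Definition IsBroom (Bf : O -> (list nat -> Prop) -> Prop) : Prop :=
  forall a (B : list nat -> Prop),
    (is_zero a -> (Bf a B <-> forall s, B s <-> s = [])) /\
    (forall c, is_odd a -> is_succ_of c a ->
       (Bf a B <->
         (exists b, lt b a /\ Bf b B) \/
         (exists h B', Bf c B' /\ forall s, B s <-> exists s', B' s' /\ s = h ++ s'))) /\
    (is_even a -> ~ is_zero a -> ~ is_top lt a ->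
       (Bf a B <->
         (exists b, lt b a /\ Bf b B) \/
         (exists (f : nat -> list nat) (Bn : nat -> list nat -> Prop),
            forking f /\ (forall n, exists b, lt b a /\ Bf b (Bn n)) /\
            forall s, B s <-> exists n s', Bn n s' /\ s = f n ++ s'))) /\
    (is_top lt a -> (Bf a B <-> exists b, lt b a /\ Bf b B)).

Definition Broom (a : O) (B : list nat -> Prop) : Prop :=
  forall Bf, IsBroom Bf -> Bf a B.

Definition BroomExt (B : list nat -> Prop) (A : (nat -> nat) -> Prop) : Prop :=
  exists (f : list nat -> nat -> list nat) (nu : list nat -> nat -> nat -> nat),
    (forall s, B s -> forking (f s)) /\
    forall x, A x <-> exists s n, B s /\ forall i, x i = app_inf (s ++ f s n) (nu s n) i.

Definition BroomA (a : O) (A : (nat -> nat) -> Prop) : Prop :=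
  exists B, Broom a B /\ BroomExt B A.

End Ord.

From Stdlib Require Import Arith List Lia FinFun Classical ClassicalEpsilon.
Import ListNotations.

(* Each broom set [B ∈ B_α] is an antichain, and [D^β_iie(B)] is controlled by induction on
   the construction of [B].  Prepending [h] only shifts derivatives,
   [D^β(h⌢B) ⊆ cl(h) ∪ h⌢D^β(B)], and an odd [α = γ+1] has [α' = γ'], so finiteness
   is inherited.  In a forking union [⋃ f_n⌢B_n] every nonempty node lies on a single prong,
   so away from [∅] the derivatives of the union are contained in those of a single
   [f_n⌢B_n].  For even [α], [β < α] implies [β' < α']; the finite set [D^{β_n'}(B_n)] has
   empty derivative, so [D^{α'}(B_n) = ∅] and only [∅] can survive.  Finally, if [A] is a
   broom-extension of [B], two points of [A] through a node outside [cl(B)] coincide, so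
   every branching node of [A] lies in [cl(B)] and [D^{α'}(D_iie(A)) ⊆ D^{α'}(B)]. *)

(** * Prefixes and the derivative [D_iie] *)

Lemma prefix_refl t : prefix t t.
Proof. exists []. now rewrite app_nil_r. Qed.

Lemma prefix_trans a b c : prefix a b -> prefix b c -> prefix a c.
Proof. intros [u ->] [v ->]. exists (u ++ v). now rewrite app_assoc. Qed.

Lemma prefix_app t u : prefix t (t ++ u).
Proof. now exists u. Qed.

Lemma prefix_nil s : prefix [] s.
Proof. now exists s. Qed.

Lemma prefix_nil_inv t : prefix t [] -> t = [].
Proof. intros [u H]. now destruct t. Qed.

Lemma prefix_comparable t u s : prefix t s -> prefix u s -> prefix t u \/ prefix u t.
Proof.
  intros [r Hr] [r' Hr']. rewrite Hr' in Hr.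
  destruct (app_eq_app _ _ _ _ Hr) as [l [[H1 H2]|[H1 H2]]].
  - left. now exists l.
  - right. now exists l.
Qed.

Lemma prefix_app_cancel h u v : prefix (h ++ u) (h ++ v) -> prefix u v.
Proof. intros [r Hr]. exists r. rewrite <- app_assoc in Hr. now apply app_inv_head in Hr. Qed.

Lemma prefix_app_compat h u v : prefix u v -> prefix (h ++ u) (h ++ v).
Proof. intros [r ->]. exists r. now rewrite app_assoc. Qed.

Lemma prefix_skipn k t s : prefix t s -> prefix (skipn k t) (skipn k s).
Proof. intros [r ->]. rewrite skipn_app. apply prefix_app. Qed.

Lemma prefix_app_skipn h s : prefix h s -> s = h ++ skipn (length h) s.
Proof. intros [r ->]. rewrite skipn_app, skipn_all, Nat.sub_diag. reflexivity. Qed.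

Lemma prefix_hd t s : t <> [] -> prefix t s -> hd 0 t = hd 0 s.
Proof. intros H [r ->]. destruct t; [congruence|reflexivity]. Qed.

Definition prefixes (s : list nat) : list (list nat) :=
  map (fun i => firstn i s) (seq 0 (S (length s))).

Lemma in_prefixes t s : prefix t s -> In t (prefixes s).
Proof.
  intros [r ->]. apply in_map_iff. exists (length t). split.
  - rewrite <- (Nat.add_0_r (length t)), firstn_app_2. simpl. now rewrite app_nil_r.
  - apply in_seq. rewrite length_app. lia.
Qed.

Lemma clTr_incl (X : list nat -> Prop) t : X t -> clTr X t.
Proof. intro H. exists t. split; [exact H|apply prefix_refl]. Qed.

Lemma clTr_prefix_closed X s t : clTr X s -> prefix t s -> clTr X t.
Proof. intros [u [Hu Hsu]] Hts. exists u. split; [exact Hu|]. eapply prefix_trans; eauto. Qed.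

Lemma finite_set_incl (X Y : list nat -> Prop) :
  (forall t, X t -> Y t) -> finite_set Y -> finite_set X.
Proof. intros H [l Hl]. exists l. auto. Qed.

Lemma finite_set_root (X : list nat -> Prop) : (forall t, X t -> t = []) -> finite_set X.
Proof. intro H. exists [[]]. intros s Hs. rewrite (H s Hs). now left. Qed.

Lemma Diie_incl_above (X Y : list nat -> Prop) t :
  (forall s, X s -> prefix t s -> clTr Y s) -> Diie X t -> Diie Y t.
Proof.
  intros H [[s [Hs Hts]] [g [Hg Hinc]]].
  assert (HY : forall u, prefix t u -> clTr X u -> clTr Y u).
  { intros u Htu [v [Hv Huv]]. destruct (H v Hv (prefix_trans _ _ _ Htu Huv)) as [w [Hw Hvw]].
    exists w. split; [exact Hw|]. eapply prefix_trans; eauto. }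
  split.
  - apply HY; [apply prefix_refl|]. now exists s.
  - exists g. split; [|exact Hinc]. intro n. destruct (Hg n) as [Hgn Htg]. auto.
Qed.

Lemma Diie_incl (X Y : list nat -> Prop) t :
  (forall s, X s -> clTr Y s) -> Diie X t -> Diie Y t.
Proof. intro H. apply Diie_incl_above. auto. Qed.

Lemma Diie_prefix_closed X s t : Diie X s -> prefix t s -> Diie X t.
Proof.
  intros [[u [Hu Hsu]] [g [Hg Hinc]]] Hts. split.
  - exists u. split; [exact Hu|]. eapply prefix_trans; eauto.
  - exists g. split; [|exact Hinc]. intro n. destruct (Hg n).
    split; [assumption|]. eapply prefix_trans; eauto.
Qed.

(* The witnessing extensions are pairwise distinct prefixes of elements of [X]. *)
Lemma Diie_finite X t : finite_set X -> ~ Diie X t.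
Proof.
  intros [l Hl] [_ [g [Hg Hinc]]].
  set (L := flat_map prefixes l).
  assert (Hin : forall k, In (g k) L).
  { intro k. destruct (Hg k) as [[s [Hs Hp]] _]. apply in_flat_map.
    exists s. split; auto. now apply in_prefixes. }
  assert (Hinj : Injective g).
  { intros n m E. destruct (Nat.eq_dec n m) as [|Hnm]; [assumption|].
    destruct (Hinc n m Hnm) as [_ Hlen]. now rewrite E in Hlen. }
  assert (HN := NoDup_incl_length (Injective_map_NoDup Hinj (seq_NoDup (S (length L)) 0))
                  (l' := L)).
  rewrite length_map, length_seq in HN.
  enough (S (length L) <= length L) by lia.
  apply HN. intros x Hx. apply in_map_iff in Hx. destruct Hx as [k [<- _]]. apply Hin.
Qed.

Definition prepend (h : list nat) (X : list nat -> Prop) : list nat -> Prop :=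
  fun s => exists w, X w /\ s = h ++ w.

(* [beyond h Y t]: [t] is comparable with [h], and its part after [h] lies in [Y]. *)
Definition beyond (h : list nat) (Y : list nat -> Prop) : list nat -> Prop :=
  fun t => prefix t (h ++ skipn (length h) t) /\ Y (skipn (length h) t).

Lemma beyond_app h s t : prefix t (h ++ s) -> beyond h (fun u => prefix u s) t.
Proof.
  intros [r Hr]. unfold beyond.
  destruct (app_eq_app _ _ _ _ Hr) as [l [[H1 H2]|[H1 H2]]].
  - subst h. rewrite length_app, skipn_all2 by lia. rewrite app_nil_r.
    split; [apply prefix_app|apply prefix_nil].
  - subst t s. rewrite skipn_app, skipn_all, Nat.sub_diag.
    split; [apply prefix_refl|apply prefix_app].
Qed.

Lemma beyond_impl h (Y Z : list nat -> Prop) t :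
  (forall u, Y u -> Z u) -> beyond h Y t -> beyond h Z t.
Proof. intros H [H1 H2]. split; auto. Qed.

Lemma clTr_prepend h X t : clTr (prepend h X) t -> beyond h (clTr X) t.
Proof.
  intros [s [[w [Hw ->]] Hts]]. destruct (beyond_app h w t Hts) as [H1 H2].
  split; [exact H1|]. now exists w.
Qed.

Lemma beyond_clTr_prepend h Y t : beyond h Y t -> clTr (prepend h Y) t.
Proof.
  intros [H1 H2]. exists (h ++ skipn (length h) t). split; [|exact H1].
  now exists (skipn (length h) t).
Qed.

Lemma finite_set_beyond h Y : finite_set Y -> finite_set (beyond h Y).
Proof.
  intros [L HL]. exists (flat_map (fun w => prefixes (h ++ w)) L). intros t [Ht HY].
  apply in_flat_map. exists (skipn (length h) t). split; auto. now apply in_prefixes.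
Qed.

(* Pairwise incomparable extensions through [h] must all extend [h]. *)
Lemma Diie_prepend h X t : Diie (prepend h X) t -> beyond h (Diie X) t.
Proof.
  intros [_ [g [Hg Hinc]]].
  assert (Hw : forall k, beyond h (clTr X) (g k)) by (intro k; now apply clTr_prepend, Hg).
  assert (Hh : forall k, prefix h (g k)).
  { intro k. destruct (Hg k) as [[s [[w [_ ->]] Hk]] _].
    destruct (prefix_comparable _ _ _ Hk (prefix_app h w)) as [Hkh|]; [|assumption].
    exfalso. destruct (Hg (S k)) as [[s' [[w' [_ ->]] Hk']] _].
    destruct (Hinc k (S k) ltac:(lia)) as [[Hi1 Hi2] _].
    destruct (prefix_comparable _ _ _ Hk' (prefix_app h w')) as [H1|H1].
    - destruct (prefix_comparable _ _ _ Hkh H1); contradiction.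
    - apply Hi1. eapply prefix_trans; eauto. }
  set (g' := fun k => skipn (length h) (g k)).
  assert (Hg' : forall k, g k = h ++ g' k) by (intro k; now apply prefix_app_skipn).
  assert (Ht : beyond h (fun u => prefix u (g' 0)) t).
  { apply beyond_app. rewrite <- Hg'. apply Hg. }
  split; [apply Ht|]. split.
  - destruct (Hw 0) as [_ [w [Hw1 Hw2]]]. exists w. split; [exact Hw1|].
    eapply prefix_trans; [apply Ht|exact Hw2].
  - exists g'. split.
    + intro k. split; [apply Hw|]. apply prefix_skipn, Hg.
    + intros n m Hnm. destruct (Hinc n m Hnm) as [[H1 H2] H3].
      rewrite (Hg' n), (Hg' m), !length_app in *.
      repeat split; [intro C; apply H1|intro C; apply H2|lia]; now apply prefix_app_compat.
Qed.

Definition fork_union (f : nat -> list nat) (X : nat -> list nat -> Prop) : list nat -> Prop :=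
  fun s => exists n, prepend (f n) (X n) s.

Lemma forking_index_unique f n m t u v : forking f -> t <> [] ->
  prefix t (f n ++ u) -> prefix t (f m ++ v) -> n = m.
Proof.
  intros [Hf1 Hf2] Ht H1 H2. destruct (Nat.eq_dec n m) as [|Hnm]; [assumption|].
  exfalso. apply (Hf2 n m Hnm).
  pose proof (prefix_hd _ _ Ht H1) as E1. pose proof (prefix_hd _ _ Ht H2) as E2.
  pose proof (Hf1 n). pose proof (Hf1 m).
  destruct (f n); [congruence|]. destruct (f m); [congruence|]. simpl in *. congruence.
Qed.

Lemma clTr_fork_union f X t : clTr (fork_union f X) t -> exists n, clTr (prepend (f n) (X n)) t.
Proof. intros [s [[n Hs] Hts]]. exists n, s. auto. Qed.

Lemma Diie_fork_union f X t : forking f -> t <> [] ->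
  Diie (fork_union f X) t -> exists n, Diie (prepend (f n) (X n)) t.
Proof.
  intros Hf Ht HD. destruct (proj1 HD) as [s0 [[n0 [w0 [_ ->]]] Hts0]].
  exists n0. revert HD. apply Diie_incl_above. intros s [n [w [Hw ->]]] Hts.
  assert (n = n0) by exact (forking_index_unique f n n0 t w w0 Hf Ht Hts Hts0).
  subst n. apply clTr_incl. now exists w.
Qed.

(** * Broom extensions *)

Lemma prefix_inf_trans t u x : prefix t u -> prefix_inf u x -> prefix_inf t x.
Proof.
  intros [r ->] H i Hi. rewrite <- H by (rewrite length_app; lia). now rewrite app_nth1.
Qed.

Lemma prefix_inf_comparable t u x : prefix_inf t x -> prefix_inf u x -> prefix t u \/ prefix u t.
Proof.
  assert (Hle : forall t u, length t <= length u -> prefix_inf t x -> prefix_inf u x -> prefix t u).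
  { intros t' u' Hl Ht Hu. exists (skipn (length t') u').
    assert (E : firstn (length t') u' = t').
    { apply nth_ext with 0 0; [rewrite length_firstn; lia|].
      intros i Hi. rewrite length_firstn in Hi. rewrite nth_firstn.
      destruct (Nat.ltb_spec i (length t')); [|lia]. rewrite Ht, Hu by lia. reflexivity. }
    rewrite <- E at 1. symmetry. apply firstn_skipn. }
  intros Ht Hu. destruct (Nat.le_ge_cases (length t) (length u)); [left|right]; auto.
Qed.

Lemma prefix_inf_app_inf s y : prefix_inf s (app_inf s y).
Proof. intros i Hi. unfold app_inf. now destruct (Nat.ltb_spec i (length s)); [|lia]. Qed.

Lemma app_inf_length s u y : u <> [] -> app_inf (s ++ u) y (length s) = hd 0 u.
Proof.
  intro Hu. unfold app_inf. rewrite length_app. destruct u as [|d u]; [congruence|].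
  destruct (Nat.ltb_spec (length s) (length s + length (d :: u))); [|simpl in *; lia].
  rewrite app_nth2, Nat.sub_diag by lia. reflexivity.
Qed.

Definition antichain (B : list nat -> Prop) : Prop :=
  forall s s', B s -> B s' -> prefix s s' -> s = s'.

Lemma broom_ext_stem B f nu s n z t :
  (forall s, B s -> forking (f s)) -> B s ->
  (forall i, z i = app_inf (s ++ f s n) (nu s n) i) -> prefix_inf t z -> ~ clTr B t ->
  prefix s t /\ length s < length t /\ z (length s) = hd 0 (f s n).
Proof.
  intros Hf Hs Ez Htz HtB.
  assert (Hfn : f s n <> []) by exact (proj1 (Hf s Hs) n).
  assert (Hsz : prefix_inf s z).
  { apply prefix_inf_trans with (s ++ f s n); [apply prefix_app|].
    intros i Hi. rewrite Ez. now apply prefix_inf_app_inf. }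
  assert (Hst : prefix s t).
  { destruct (prefix_inf_comparable _ _ _ Hsz Htz) as [|Hts]; [assumption|].
    exfalso. apply HtB. now exists s. }
  split; [exact Hst|]. split.
  - destruct Hst as [[|d r] ->].
    + exfalso. apply HtB. exists s. rewrite app_nil_r. split; [exact Hs|apply prefix_refl].
    + rewrite length_app. simpl. lia.
  - rewrite Ez. now apply app_inf_length.
Qed.

(* Both points have the same stem [s] in the antichain [B] below [t], and the same
   first fork digit [t(|s|)]. *)
Lemma broom_ext_branch_unique B A x y t : antichain B -> BroomExt B A -> A x -> A y ->
  prefix_inf t x -> prefix_inf t y -> ~ clTr B t -> forall i, x i = y i.
Proof.
  intros Hanti [f [nu [Hf HA]]] Hx Hy Htx Hty HtB.
  apply HA in Hx, Hy. destruct Hx as [s [n [Hs Ex]]], Hy as [s' [n' [Hs' Ey]]].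
  destruct (broom_ext_stem B f nu s n x t Hf Hs Ex Htx HtB) as [Hst [Hlen Hx]].
  destruct (broom_ext_stem B f nu s' n' y t Hf Hs' Ey Hty HtB) as [Hs't [_ Hy]].
  assert (s' = s).
  { destruct (prefix_comparable _ _ _ Hst Hs't); [symmetry|]; apply Hanti; auto. }
  subst s'.
  assert (n = n').
  { destruct (Nat.eq_dec n n') as [|Hnn']; [assumption|]. exfalso.
    apply (proj2 (Hf s Hs) n n' Hnn'). now rewrite <- Hx, <- Hy, <- Htx, <- Hty. }
  subst n'. intro i. now rewrite Ex, Ey.
Qed.

Lemma Diie_inf_broom_ext B A t : antichain B -> BroomExt B A -> Diie_inf A t -> clTr B t.
Proof.
  intros Hanti HA [_ [g [Hg Hinc]]]. apply NNPP. intro HtB.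
  destruct (Hg 0) as [[x [Hx Hgx]] Htg0], (Hg 1) as [[y [Hy Hgy]] Htg1].
  assert (Exy := broom_ext_branch_unique B A x y t Hanti HA Hx Hy
    (prefix_inf_trans _ _ _ Htg0 Hgx) (prefix_inf_trans _ _ _ Htg1 Hgy) HtB).
  assert (Hg1x : prefix_inf (g 1) x) by (intros i Hi; rewrite Exy; auto).
  destruct (Hinc 0 1 ltac:(lia)) as [[H01 H10] _].
  destruct (prefix_inf_comparable _ _ _ Hgx Hg1x); contradiction.
Qed.

(** * Ordinal arithmetic in an abstract well-order *)

Section Ordinals.
Variables (O : Type) (lt : O -> O -> Prop).
Hypothesis lt_irrefl : forall a, ~ lt a a.
Hypothesis lt_trans : forall a b c, lt a b -> lt b c -> lt a c.
Hypothesis lt_total : forall a b, lt a b \/ a = b \/ lt b a.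
Hypothesis lt_wf : well_founded lt.

Definition leo (x y : O) : Prop := x = y \/ lt x y.
Definition is_base (l : O) : Prop := is_zero lt l \/ is_limit lt l.

Lemma lt_asym a b : lt a b -> ~ lt b a.
Proof. intros Hab Hba. exact (lt_irrefl a (lt_trans _ _ _ Hab Hba)). Qed.

Lemma lt_leo_trans a b c : lt a b -> leo b c -> lt a c.
Proof. intros H [<-|H']; eauto. Qed.

Lemma leo_lt_trans a b c : leo a b -> lt b c -> lt a c.
Proof. intros [->|H] H'; eauto. Qed.

Lemma not_lt_leo a b : ~ lt b a -> leo a b.
Proof. intro H. destruct (lt_total a b) as [|[|]]; [right|left|]; tauto. Qed.

Lemma is_succ_of_pred_unique b b' a : is_succ_of lt b a -> is_succ_of lt b' a -> b = b'.
Proof.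
  intros [H1 H2] [H3 H4]. destruct (lt_total b b') as [H|[H|H]]; [|assumption|].
  - exfalso. apply (H2 b'). auto.
  - exfalso. apply (H4 b). auto.
Qed.

Lemma is_succ_of_unique b a a' : is_succ_of lt b a -> is_succ_of lt b a' -> a = a'.
Proof.
  intros [H1 H2] [H3 H4]. destruct (lt_total a a') as [H|[H|H]]; [|assumption|].
  - exfalso. apply (H4 a). auto.
  - exfalso. apply (H2 a'). auto.
Qed.

Lemma is_succ_of_leo b a x : is_succ_of lt b a -> lt x a -> leo x b.
Proof. intros [_ Hs] Hxa. apply not_lt_leo. intro Hbx. exact (Hs x (conj Hbx Hxa)). Qed.

Lemma is_base_no_pred l b : is_base l -> ~ is_succ_of lt b l.
Proof.
  intros [Hz|[_ Hl]] Hs.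
  - exact (Hz b (proj1 Hs)).
  - apply Hl. eauto.
Qed.

Lemma not_zero_has_lt b : ~ is_zero lt b -> exists c, lt c b.
Proof. intro H. apply NNPP. intro Hn. apply H. intros c Hc. apply Hn. now exists c. Qed.

Lemma succn_unique l k a a' : succn lt l k a -> succn lt l k a' -> a = a'.
Proof.
  revert a a'. induction k as [|k IH]; simpl; intros a a' H1 H2.
  - congruence.
  - destruct H1 as [b [Hb Hs]], H2 as [b' [Hb' Hs']].
    rewrite (IH _ _ Hb Hb') in Hs. eapply is_succ_of_unique; eauto.
Qed.

Lemma succn_exists_below l k a j : succn lt l k a -> j <= k ->
  exists b, succn lt l j b /\ (j < k -> lt b a).
Proof.
  revert a. induction k as [|k IH]; intros a Ha Hj.
  - exists a. assert (j = 0) by lia. subst. split; [exact Ha|lia].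
  - destruct (Nat.eq_dec j (S k)) as [->|Hjk].
    + exists a. split; [exact Ha|lia].
    + destruct Ha as [c [Hc Hs]]. destruct (IH c Hc ltac:(lia)) as [b [Hb Hbc]].
      exists b. split; [exact Hb|]. intros _. apply leo_lt_trans with c; [|apply Hs].
      destruct (Nat.eq_dec j k) as [->|]; [left; exact (succn_unique _ _ _ _ Hb Hc)|].
      right. apply Hbc. lia.
Qed.

Lemma succn_lt l j k b a : succn lt l j b -> succn lt l k a -> j < k -> lt b a.
Proof.
  intros Hb Ha Hjk. destruct (succn_exists_below l k a j Ha ltac:(lia)) as [b' [Hb' Hlt]].
  rewrite (succn_unique _ _ _ _ Hb Hb'). auto.
Qed.

Lemma succn_leo l j k b a : succn lt l j b -> succn lt l k a -> j <= k -> leo b a.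
Proof.
  intros Hb Ha Hjk. destruct (Nat.eq_dec j k) as [->|].
  - left. eapply succn_unique; eauto.
  - right. eapply succn_lt; eauto. lia.
Qed.

Lemma leo_succn l k a : succn lt l k a -> leo l a.
Proof. intro Ha. apply (succn_leo l 0 k); [reflexivity|exact Ha|lia]. Qed.

Lemma succn_base_unique l k l' k' a : is_base l -> is_base l' ->
  succn lt l k a -> succn lt l' k' a -> l = l' /\ k = k'.
Proof.
  intros Hl Hl'. revert a k'. induction k as [|k IH]; intros a k' H1 H2.
  - simpl in H1. subst a. destruct k' as [|k'].
    + simpl in H2. split; congruence.
    + destruct H2 as [b [_ Hs]]. exfalso. exact (is_base_no_pred _ _ Hl Hs).
  - destruct H1 as [b [Hb Hs]]. destruct k' as [|k'].
    + simpl in H2. subst a. exfalso. exact (is_base_no_pred _ _ Hl' Hs).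
    + destruct H2 as [b' [Hb' Hs']]. rewrite <- (is_succ_of_pred_unique _ _ _ Hs Hs') in Hb'.
      destruct (IH _ _ Hb Hb'). split; congruence.
Qed.

Lemma base_decomposition a : exists l k, is_base l /\ succn lt l k a.
Proof.
  induction a as [a IH] using (well_founded_ind lt_wf).
  destruct (classic (is_zero lt a)) as [Hz|Hz].
  - exists a, 0. split; [left; exact Hz|reflexivity].
  - destruct (classic (exists b, is_succ_of lt b a)) as [[b Hb]|Hn].
    + destruct (IH b (proj1 Hb)) as [l [k [Hl Hk]]]. exists l, (S k).
      split; [exact Hl|]. now exists b.
    + exists a, 0. split; [right; split; assumption|reflexivity].
Qed.

Lemma even_not_odd a : is_even lt a -> ~ is_odd lt a.
Proof.
  intros [l [n [Hl H1]]] [l' [n' [Hl' H2]]].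
  destruct (succn_base_unique _ _ _ _ _ Hl Hl' H1 H2). lia.
Qed.

Lemma odd_has_pred a : is_odd lt a -> exists c, is_succ_of lt c a.
Proof. intros [l [n [_ H]]]. rewrite Nat.add_1_r in H. destruct H as [c [_ Hc]]. eauto. Qed.

Lemma prime_exists a : exists a', prime_of lt a a'.
Proof.
  destruct (base_decomposition a) as [l [k [Hl Hk]]].
  pose proof (Nat.div_mod k 2 ltac:(lia)) as E.
  pose proof (Nat.mod_upper_bound k 2 ltac:(lia)).
  destruct (succn_exists_below l k a (k / 2) Hk ltac:(lia)) as [a' [Ha' _]].
  exists a', l, (k / 2), (k mod 2). repeat split; auto. now rewrite <- E.
Qed.

Lemma prime_of_zero a a' : is_zero lt a -> prime_of lt a a' -> a' = a.
Proof.
  intros Hz [l [n [i [_ [_ [Ha Ha']]]]]]. destruct (2 * n + i) as [|k] eqn:E.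
  - assert (n = 0) by lia. subst n. simpl in Ha, Ha'. congruence.
  - exfalso. destruct Ha as [c [_ [Hc _]]]. exact (Hz c Hc).
Qed.

Lemma prime_of_odd_pred a c a' : is_odd lt a -> is_succ_of lt c a ->
  prime_of lt a a' -> prime_of lt c a'.
Proof.
  intros [l' [n' [Hl' Hodd]]] Hc [l [n [i [Hl [Hi [Ha Ha']]]]]].
  destruct (succn_base_unique _ _ _ _ _ Hl Hl' Ha Hodd) as [<- E].
  assert (i = 1) by lia. assert (n' = n) by lia. subst i n'.
  rewrite Nat.add_1_r in Hodd. destruct Hodd as [c' [Hc' Hs]].
  rewrite (is_succ_of_pred_unique _ _ _ Hc Hs).
  exists l, n, 0. repeat split; auto. now rewrite Nat.add_0_r.
Qed.

Lemma succn_interval l k a x : succn lt l k a -> leo l x -> leo x a ->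
  exists r, succn lt l r x.
Proof.
  revert a. induction k as [|k IH]; intros a Ha Hlx Hxa.
  - simpl in Ha. subst a. exists 0. simpl.
    destruct Hlx as [|H1]; [congruence|]. destruct Hxa as [|H2]; [congruence|].
    exfalso. exact (lt_asym _ _ H1 H2).
  - destruct Hxa as [->|Hxa]; [now exists (S k)|].
    destruct Ha as [c [Hc Hs]]. exact (IH c Hc Hlx (is_succ_of_leo _ _ _ Hs Hxa)).
Qed.

Lemma base_not_in_succn l k a x : is_base x -> succn lt l k a -> lt l x -> ~ leo x a.
Proof.
  intros Hx Ha Hlx Hxa. destruct (succn_interval l k a x Ha (or_intror Hlx) Hxa) as [[|r] Hr].
  - simpl in Hr. subst. exact (lt_irrefl _ Hlx).
  - destruct Hr as [c [_ Hc]]. exact (is_base_no_pred _ _ Hx Hc).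
Qed.

Lemma prime_of_monotone a a' b b' : prime_of lt a a' -> prime_of lt b b' -> lt b a ->
  leo b' a' /\ (is_even lt a -> lt b' a').
Proof.
  intros [l [n [i [Hl [Hi [Ha Ha']]]]]] [m [p [j [Hm [Hj [Hb Hb']]]]]] Hba.
  assert (Heven : is_even lt a -> i = 0).
  { intros [l' [n' [Hl' H']]]. destruct (succn_base_unique _ _ _ _ _ Hl Hl' Ha H'). lia. }
  destruct (lt_total m l) as [Hml|[<-|Hlm]].
  - assert (Hbl : lt b l).
    { apply NNPP. intro Hbl. apply (base_not_in_succn m (2 * p + j) b l Hl Hb Hml).
      now apply not_lt_leo. }
    assert (lt b' a').
    { apply leo_lt_trans with b; [apply (succn_leo m p (2 * p + j)); auto; lia|].
      exact (lt_leo_trans _ _ _ Hbl (leo_succn _ _ _ Ha')). }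
    split; [right|]; auto.
  - assert (Hpn : 2 * p + j < 2 * n + i).
    { destruct (Nat.lt_ge_cases (2 * p + j) (2 * n + i)) as [|Hge]; [assumption|].
      exfalso. destruct (succn_leo m _ _ _ _ Ha Hb Hge) as [->|Hab];
        [exact (lt_irrefl _ Hba)|exact (lt_asym _ _ Hab Hba)]. }
    split.
    + apply (succn_leo m p n); auto. lia.
    + intro He. specialize (Heven He). apply (succn_lt m p n); auto. lia.
  - exfalso. apply (base_not_in_succn l (2 * n + i) a m Hm Ha Hlm).
    right. exact (leo_lt_trans _ _ _ (leo_succn _ _ _ Hb) Hba).
Qed.

(** * Transfinite iteration of [D_iie] *)

Section Iteration.
Variable S : list nat -> Prop.

(* The least solution of [IsDiter]; it contains [Dpow]. *)
Inductive Diter : O -> list nat -> Prop :=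
| Diter_zero b t : is_zero lt b -> clTr S t -> Diter b t
| Diter_succ b c t : is_succ_of lt c b -> Diie (Diter c) t -> Diter b t
| Diter_limit b t : is_limit lt b -> (forall c, lt c b -> Diter c t) -> Diter b t.

Lemma Diter_IsDiter : IsDiter lt S Diter.
Proof.
  intro b. split; [|split].
  - intros Hz t. split; [|now apply Diter_zero].
    intro H. inversion H as [? ? ? Ht|? c ? Hc|? ? Hl]; subst; [exact Ht| |]; exfalso.
    + exact (Hz c (proj1 Hc)).
    + exact (proj1 Hl Hz).
  - intros c Hc t. split; [|intro; eapply Diter_succ; eauto].
    intro H. inversion H as [? ? Hz|? c' ? Hc'|? ? Hl]; subst.
    + exfalso. exact (Hz c (proj1 Hc)).
    + now rewrite (is_succ_of_pred_unique _ _ _ Hc Hc').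
    + exfalso. apply (proj2 Hl). eauto.
  - intros Hl t. split; [|now apply Diter_limit].
    intro H. inversion H as [? ? Hz|? c ? Hc|]; subst; [| |assumption]; exfalso.
    + exact (proj1 Hl Hz).
    + apply (proj2 Hl). eauto.
Qed.

Lemma Dpow_Diter a t : Dpow lt S a t -> Diter a t.
Proof. intro H. apply H, Diter_IsDiter. Qed.

Lemma Diter_prefix_closed b s t : Diter b s -> prefix t s -> Diter b t.
Proof.
  revert s t. induction b as [b IH] using (well_founded_ind lt_wf). intros s t H Hts.
  destruct H as [b s Hz [u [Hu Hsu]]|b c s Hc HD|b s Hl Hlim].
  - apply Diter_zero; [exact Hz|]. exists u. split; [exact Hu|]. eapply prefix_trans; eauto.
  - eapply Diter_succ; [exact Hc|]. eapply Diie_prefix_closed; eauto.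
  - apply Diter_limit; [exact Hl|]. intros c Hc. eapply IH; eauto.
Qed.

Lemma Diter_antitone b c t : leo c b -> Diter b t -> Diter c t.
Proof.
  intros [<-|Hcb]; [trivial|]. revert c t Hcb.
  induction b as [b IH] using (well_founded_ind lt_wf). intros c t Hcb H.
  destruct H as [b t Hz|b c' t Hc' [[s [Hs Hts]] _]|b t Hl Hlim];
    [exfalso; exact (Hz c Hcb)| |auto].
  pose proof (Diter_prefix_closed c' s t Hs Hts) as Ht.
  destruct (is_succ_of_leo _ _ _ Hc' Hcb) as [->|Hcc']; [exact Ht|].
  exact (IH c' (proj1 Hc') c t Hcc' Ht).
Qed.

Lemma Diter_empty_after_finite b g t : finite_set (Diter b) -> lt b g -> ~ Diter g t.
Proof.
  intro Hfin. revert t. induction g as [g IH] using (well_founded_ind lt_wf). intros t Hbg H.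
  destruct H as [g t Hz|g c t Hc HD|g t Hl Hlim].
  - exact (Hz b Hbg).
  - apply (Diie_finite (Diter c) t); [|exact HD].
    eapply finite_set_incl; [|exact Hfin]. intro s. apply Diter_antitone.
    exact (is_succ_of_leo _ _ _ Hc Hbg).
  - destruct (classic (exists c, lt b c /\ lt c g)) as [[c [Hbc Hcg]]|Hn].
    + exact (IH c Hcg t Hbc (Hlim c Hcg)).
    + apply (proj2 Hl). exists b. split; [exact Hbg|]. intros c Hc. apply Hn. now exists c.
Qed.

End Iteration.

Lemma Diter_incl (S1 S2 : list nat -> Prop) b t :
  (forall s, S1 s -> clTr S2 s) -> Diter S1 b t -> Diter S2 b t.
Proof.
  intros HS. revert t. induction b as [b IH] using (well_founded_ind lt_wf). intros t H.
  destruct H as [b t Hz [s [Hs Hts]]|b c t Hc HD|b t Hl Hlim].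
  - apply Diter_zero; [exact Hz|]. exact (clTr_prefix_closed _ _ _ (HS s Hs) Hts).
  - eapply Diter_succ; [exact Hc|]. revert HD. apply Diie_incl.
    intros s Hs. apply clTr_incl, IH; [apply Hc|exact Hs].
  - apply Diter_limit; auto.
Qed.

Lemma Diter_prepend h B b t : Diter (prepend h B) b t -> beyond h (Diter B b) t.
Proof.
  revert t. induction b as [b IH] using (well_founded_ind lt_wf). intros t H.
  destruct H as [b t Hz Ht|b c t Hc HD|b t Hl Hlim].
  - apply (beyond_impl h (clTr B)); [intros u; now apply Diter_zero|].
    now apply clTr_prepend.
  - apply (beyond_impl h (Diie (Diter B c))); [intros u; now apply Diter_succ with (c := c)|].
    apply Diie_prepend. revert HD. apply Diie_incl. intros s Hs.
    apply beyond_clTr_prepend, IH; [apply Hc|exact Hs].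
  - destruct (not_zero_has_lt b (proj1 Hl)) as [c0 Hc0].
    split; [apply (IH c0 Hc0 t (Hlim c0 Hc0))|].
    apply Diter_limit; [exact Hl|]. intros c Hc. apply (IH c Hc t (Hlim c Hc)).
Qed.

(* A nonempty node lies on a single prong of the fork. *)
Lemma Diter_fork_union f X b t : forking f -> t <> [] ->
  Diter (fork_union f X) b t -> exists n, beyond (f n) (Diter (X n) b) t.
Proof.
  intros Hf. revert t. induction b as [b IH] using (well_founded_ind lt_wf). intros t Ht H.
  destruct H as [b t Hz HT|b c t Hc HD|b t Hl Hlim].
  - destruct (clTr_fork_union f X t HT) as [n Hn]. exists n.
    apply (beyond_impl (f n) (clTr (X n))); [intros u; now apply Diter_zero|].
    now apply clTr_prepend.
  - assert (HD' : Diie (fork_union f (fun n => Diter (X n) c)) t).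
    { revert HD. apply Diie_incl_above. intros s Hs Hts.
      assert (Hs0 : s <> []) by (intros ->; apply Ht, prefix_nil_inv, Hts).
      destruct (IH c (proj1 Hc) s Hs0 Hs) as [n Hn].
      destruct (beyond_clTr_prepend _ _ _ Hn) as [u [Hu Hsu]]. exists u. split; [|exact Hsu].
      now exists n. }
    destruct (Diie_fork_union f _ t Hf Ht HD') as [n Hn]. exists n.
    apply (beyond_impl (f n) (Diie (Diter (X n) c))); [intros u; now apply Diter_succ with (c := c)|].
    now apply Diie_prepend.
  - destruct (not_zero_has_lt b (proj1 Hl)) as [c0 Hc0].
    destruct (IH c0 Hc0 t Ht (Hlim c0 Hc0)) as [n0 [Hn0 _]]. exists n0.
    split; [exact Hn0|]. apply Diter_limit; [exact Hl|]. intros c Hc.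
    destruct (IH c Hc t Ht (Hlim c Hc)) as [n [Hn HX]].
    now rewrite (forking_index_unique f n0 n t _ _ Hf Ht Hn0 Hn).
Qed.

(** * Broom sets *)

Definition Diter_bounded (a : O) (B : list nat -> Prop) : Prop :=
  forall a', prime_of lt a a' ->
    finite_set (Diter B a') /\ (is_even lt a -> forall t, Diter B a' t -> t = []).

(* [D^{b'}(B)] finite and [b' < a'] force [D^{a'}(B)] to be empty. *)
Lemma Diter_bounded_lt a b B : lt b a -> Diter_bounded b B -> Diter_bounded a B.
Proof.
  intros Hba Hb a' Ha'. destruct (prime_exists b) as [b' Hb'].
  destruct (Hb b' Hb') as [Hfin _].
  destruct (prime_of_monotone a a' b b' Ha' Hb' Hba) as [Hle Hlt]. split.
  - eapply finite_set_incl; [|exact Hfin]. intro t. now apply Diter_antitone.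
  - intros He t Ht. exfalso. exact (Diter_empty_after_finite B b' a' t Hfin (Hlt He) Ht).
Qed.

(* The least solution of [IsBroom]; it contains every [Broom] set. *)
Inductive broom : O -> (list nat -> Prop) -> Prop :=
| broom_zero a B : is_zero lt a -> (forall s, B s <-> s = []) -> broom a B
| broom_odd_lt a b B : is_odd lt a -> lt b a -> broom b B -> broom a B
| broom_odd_prepend a c B' h B : is_odd lt a -> is_succ_of lt c a -> broom c B' ->
    (forall s, B s <-> prepend h B' s) -> broom a B
| broom_even_lt a b B : is_even lt a -> ~ is_zero lt a -> ~ is_top lt a -> lt b a ->
    broom b B -> broom a B
| broom_even_fork a f Bn bs B : is_even lt a -> ~ is_zero lt a -> ~ is_top lt a ->
    forking f -> (forall n, lt (bs n) a) -> (forall n, broom (bs n) (Bn n)) ->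
    (forall s, B s <-> fork_union f Bn s) -> broom a B
| broom_top a b B : is_top lt a -> lt b a -> broom b B -> broom a B.

Lemma broom_IsBroom : (forall w, is_top lt w -> is_limit lt w) -> IsBroom lt broom.
Proof.
  intro top_is_limit.
  assert (Htop_odd : forall a, is_top lt a -> ~ is_odd lt a).
  { intros a Ht Ho. destruct (odd_has_pred a Ho) as [c Hc].
    apply (proj2 (top_is_limit a Ht)). eauto. }
  intros a B. split; [|split; [|split]].
  - intro Hz. split; [|now apply broom_zero].
    intro H. revert Hz.
    destruct H as [a B _ HB|a b B _ Hba _|a c B' h B _ Hc _ _|a b B _ _ _ Hba _
      |a f Bn bs B _ _ _ _ Hbs _ _|a b B _ Hba _]; intro Hz; [exact HB|..]; exfalso.
    + exact (Hz b Hba).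
    + exact (Hz c (proj1 Hc)).
    + exact (Hz b Hba).
    + exact (Hz (bs 0) (Hbs 0)).
    + exact (Hz b Hba).
  - intros c Ho Hc. split.
    + intro H. revert Ho Hc.
      destruct H as [a B Hz _|a b B _ Hba Hb|a c' B' h B _ Hc' HB' HB|a b B He _ _ _ _
        |a f Bn bs B He _ _ _ _ _ _|a b B Ht _ _]; intros Ho Hc.
      * exfalso. exact (Hz c (proj1 Hc)).
      * left. eauto.
      * right. rewrite (is_succ_of_pred_unique _ _ _ Hc Hc'). eauto.
      * exfalso. exact (even_not_odd a He Ho).
      * exfalso. exact (even_not_odd a He Ho).
      * exfalso. exact (Htop_odd a Ht Ho).
    + intros [[b [Hba Hb]]|[h [B' [HB' HB]]]].
      * eapply broom_odd_lt; eauto.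
      * eapply broom_odd_prepend; eauto.
  - intros He Hnz Hnt. split.
    + intro H. revert He Hnz Hnt.
      destruct H as [a B Hz _|a b B Ho _ _|a c B' h B Ho _ _ _|a b B _ _ _ Hba Hb
        |a f Bn bs B _ _ _ Hf Hbs HBn HB|a b B Ht _ _]; intros He Hnz Hnt;
        try contradiction.
      * exfalso. exact (even_not_odd a He Ho).
      * exfalso. exact (even_not_odd a He Ho).
      * left. eauto.
      * right. exists f, Bn. split; [exact Hf|]. split; [|exact HB].
        intro n. exists (bs n). auto.
    + intros [[b [Hba Hb]]|[f [Bn [Hf [Hbs HB]]]]].
      * eapply broom_even_lt; eauto.
      * destruct (choice _ Hbs) as [bs Hbs'].
        eapply broom_even_fork; eauto; intro n; apply Hbs'.
  - intro Ht. split.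
    + intro H. revert Ht.
      destruct H as [a B Hz _|a b B Ho _ _|a c B' h B Ho _ _ _|a b B _ _ Hnt Hba Hb
        |a f Bn bs B _ _ Hnt _ _ _ _|a b B _ Hba Hb]; intro Ht; try contradiction; eauto.
      * exfalso. exact (proj1 (top_is_limit a Ht) Hz).
      * exfalso. exact (Htop_odd a Ht Ho).
      * exfalso. exact (Htop_odd a Ht Ho).
    + intros [b [Hba Hb]]. eapply broom_top; eauto.
Qed.

Lemma broom_antichain a B : broom a B -> antichain B.
Proof.
  induction 1 as [a B _ HB|a b B _ _ _ IH|a c B' h B _ _ _ IH HB|a b B _ _ _ _ _ IH
    |a f Bn bs B _ _ _ Hf _ _ IH HB|a b B _ _ _ IH]; intros s s' Hs Hs' Hss'; auto.
  - apply HB in Hs, Hs'. congruence.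
  - apply HB in Hs, Hs'. destruct Hs as [u [Hu ->]], Hs' as [u' [Hu' ->]].
    f_equal. apply IH; [exact Hu|exact Hu'|]. eapply prefix_app_cancel; eauto.
  - apply HB in Hs, Hs'. destruct Hs as [n [u [Hu ->]]], Hs' as [m [u' [Hu' ->]]].
    assert (Hne : f n ++ u <> []) by (intro E; apply app_eq_nil in E; exact (proj1 Hf n (proj1 E))).
    assert (n = m) by exact (forking_index_unique f n m _ _ _ Hf Hne (prefix_refl _) Hss').
    subst m. f_equal. apply (IH n); [exact Hu|exact Hu'|]. eapply prefix_app_cancel; eauto.
Qed.

Lemma broom_Diter_bounded a B : broom a B -> Diter_bounded a B.
Proof.
  induction 1 as [a B Hz HB|a b B _ Hba _ IH|a c B' h B Ho Hc _ IH HB|a b B _ _ _ Hba _ IH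
    |a f Bn bs B He _ _ Hf Hbs _ IH HB|a b B _ Hba _ IH];
    try (apply (Diter_bounded_lt a b B Hba IH)); intros a' Ha'.
  - rewrite (prime_of_zero a a' Hz Ha').
    assert (Hroot : forall t, Diter B a t -> t = []).
    { intros t Ht. apply (proj1 (Diter_IsDiter B a) Hz t) in Ht.
      destruct Ht as [s [Hs Hts]]. apply HB in Hs. subst s. now apply prefix_nil_inv. }
    split; [now apply finite_set_root|auto].
  - destruct (IH a' (prime_of_odd_pred a c a' Ho Hc Ha')) as [Hfin _]. split.
    + apply (finite_set_incl _ (beyond h (Diter B' a'))); [|now apply finite_set_beyond].
      intros t Ht. apply Diter_prepend. revert Ht. apply Diter_incl.
      intros s Hs. apply clTr_incl, HB, Hs.
    + intro He. exfalso. exact (even_not_odd a He Ho).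
  - assert (Hroot : forall t, Diter B a' t -> t = []).
    { intros t Ht. apply NNPP. intro Hne.
      assert (HF : Diter (fork_union f Bn) a' t).
      { revert Ht. apply Diter_incl. intros s Hs. apply clTr_incl, HB, Hs. }
      destruct (Diter_fork_union f Bn a' t Hf Hne HF) as [n [_ Hn]].
      destruct (prime_exists (bs n)) as [b' Hb'].
      destruct (prime_of_monotone a a' (bs n) b' Ha' Hb' (Hbs n)) as [_ Hlt].
      exact (Diter_empty_after_finite (Bn n) b' a' _ (proj1 (IH n b' Hb')) (Hlt He) Hn). }
    split; [now apply finite_set_root|auto].
Qed.

Lemma Dpow_broom_bounded a a' S B : broom a B -> prime_of lt a a' ->
  (forall t, S t -> clTr B t) ->
  finite_set (Dpow lt S a') /\ (is_even lt a -> empty_or_root (Dpow lt S a')).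
Proof.
  intros HB Ha' HS. destruct (broom_Diter_bounded a B HB a' Ha') as [Hfin Hroot].
  assert (Hsub : forall t, Dpow lt S a' t -> Diter B a' t).
  { intros t Ht. apply (Diter_incl S); [exact HS|now apply Dpow_Diter]. }
  split; [exact (finite_set_incl _ _ Hsub Hfin)|]. intro He.
  destruct (classic (Dpow lt S a' [])) as [H0|H0]; [right|left].
  - intro s. split; [intro Hs; exact (Hroot He s (Hsub s Hs))|now intros ->].
  - intros s Hs. apply H0. now rewrite <- (Hroot He s (Hsub s Hs)).
Qed.

End Ordinals.

(* Every smaller ordinal has countably many predecessors, the top uncountably many. *)
Lemma IsOmega1Plus1_top_limit (O : Type) (lt : O -> O -> Prop) :
  IsOmega1Plus1 lt -> forall w, is_top lt w -> is_limit lt w.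
Proof.
  intros [irr [trans [total [_ [w0 [Hw0 [Hc Hnc]]]]]]] w Hw.
  assert (w = w0) as ->.
  { destruct (Hw0 w) as [|H1]; [assumption|]. destruct (Hw w0) as [|H2]; [congruence|].
    exfalso. exact (irr w (trans _ _ _ H1 H2)). }
  split.
  - intro Hz. apply Hnc. exists (fun _ => w0). intros c Hcw. exfalso. exact (Hz c Hcw).
  - intros [b [Hbw Hs]]. apply Hnc. destruct (Hc b Hbw) as [e He].
    exists (fun n => match n with 0 => b | S k => e k end). intros c Hcw.
    destruct (total c b) as [Hcb|[->|Hbc]].
    + destruct (He c Hcb) as [k Hk]. now exists (S k).
    + now exists 0.
    + exfalso. exact (Hs c (conj Hbc Hcw)).
Qed.

Theorem lemma7p1 (O : Type) (lt : O -> O -> Prop) (HO : IsOmega1Plus1 lt) (a : O) :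
  (exists a', prime_of lt a a') /\
  forall a', prime_of lt a a' ->
    (forall B, Broom lt a B ->
       finite_set (Dpow lt B a') /\
       (is_even lt a -> empty_or_root (Dpow lt B a'))) /\
    (forall A, BroomA lt a A ->
       finite_set (Dpow lt (Diie_inf A) a') /\
       (is_even lt a -> empty_or_root (Dpow lt (Diie_inf A) a'))).
Proof.
  pose proof (IsOmega1Plus1_top_limit O lt HO) as Htop.
  destruct HO as [irr [trans [total [wf _]]]].
  assert (Hbroom : forall B, Broom lt a B -> broom O lt a B).
  { intros B HB. apply HB. now apply broom_IsBroom. }
  split; [now apply prime_exists|]. intros a' Ha'. split.
  - intros B HB. apply Dpow_broom_bounded with B; auto using clTr_incl.
  - intros A [B [HB HA]]. apply Dpow_broom_bounded with B; auto.
    intro t. apply Diie_inf_broom_ext; [|exact HA].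
    exact (broom_antichain O lt a B (Hbroom B HB)).
Qed.
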